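(* Let $\mathcal{P}\subseteq[0,1]^n$ be a polytope such that $\mathcal{P}\cap(0,1)^n\neq\emptyset$. If $\mathcal{P}$ is not of the form $\mathcal{P}=[0,1]^n\cap\mathcal{H}$ for some affine subspace $\mathcal{H}\subseteq\mathbb{R}^n$, then no Bernoulli factory for $\mathcal{P}$ exists.
   Context: A Bernoulli factory with output set $V$ (for inputs $x=(x_1,\dots,x_n)\in[0,1]^n$) is a (possibly infinite) rooted binary tree in which every internal node is labeled either by an index $i\in[n]$ or by a known constant $c\in(0,1)$, the two edges from an internal node to its children are labeled $0$ and $1$, and every leaf is labeled by an element of $V$. On input $x$, one starts at the root; at an internal node labeled $i$ one flips a fresh independent coin that equals $1$ with probability $x_i$ (an ''$x_i$-coin''), at a node labeled $c$ a fresh independent coin with bias $c$, and follows the edge labeled by the outcome; on reaching a leaf one outputs its label. $\mathcal{F}(x)$ denotes the random output ($\mathcal{F}(x)=\emptyset$ if no leaf is reached); $\mathcal{F}$ terminates almost surely on $S$ if $\Pr[\mathcal{F}(x)=\emptyset]=0$ for all $x\in S$. For a polytope $\mathcal{P}\subseteq[0,1]^n$ with vertex set $V$ (vertices viewed as vectors in $\mathbb{R}^n$), a Bernoulli factory for $\mathcal{P}$ is a Bernoulli factory $\mathcal{F}$ with output set $V$ that terminates almost surely on $\mathcal{P}\cap(0,1)^n$ and satisfies $\mathbb{E}[\mathcal{F}(x)]=x$ for all $x\in\mathcal{P}\cap(0,1)^n$. *)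

From HB Require Import structures.
From mathcomp Require Import all_boot all_order all_algebra.
From mathcomp Require Import all_classical all_reals topology normedtype sequences.
Set Implicit Arguments. Unset Strict Implicit. Unset Printing Implicit Defensive.
Import Order.TTheory GRing.Theory Num.Theory.
Import numFieldNormedType.Exports.
Local Open Scope classical_set_scope.
Local Open Scope ring_scope.

Definition vec (R : realType) (n : nat) := 'I_n -> R.

Definition conv_hull (R : realType) (n m : nat) (s : 'I_m -> vec R n) : set (vec R n) :=
  [set x | exists w : 'I_m -> R, (forall i, 0 <= w i) /\ \sum_(i < m) w i = 1 /\
       forall j, x j = \sum_(i < m) w i * s i j].

Definition is_polytope (R : realType) (n : nat) (P : set (vec R n)) : Prop :=
  exists (m : nat) (s : 'I_m -> vec R n), P = conv_hull s.

Definition is_vertex (R : realType) (n : nat) (P : set (vec R n)) (v : vec R n) : Prop :=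
  P v /\ forall (y z : vec R n) (t : R), P y -> P z -> 0 < t < 1 ->
    (forall j, v j = t * y j + (1 - t) * z j) -> y = v /\ z = v.

Definition in_cube (R : realType) (n : nat) (x : vec R n) : Prop :=
  forall j, 0 <= x j <= 1.

Definition in_open_cube (R : realType) (n : nat) (x : vec R n) : Prop :=
  forall j, 0 < x j < 1.

Definition is_linear_subspace (R : realType) (n : nat) (L : set (vec R n)) : Prop :=
  L (fun _ => 0) /\
  (forall u v, L u -> L v -> L (fun j => u j + v j)) /\
  (forall (a : R) u, L u -> L (fun j => a * u j)).

Definition is_affine_subspace (R : realType) (n : nat) (H : set (vec R n)) : Prop :=
  exists (x0 : vec R n) (L : set (vec R n)), is_linear_subspace L /\
    H = [set y | exists u, L u /\ y = (fun j => x0 j + u j)].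

(* Node labels: flip an x_i-coin, flip a known c-coin, or a leaf with an output. *)
Inductive node (R : realType) (n : nat) :=
  | Coin of 'I_n
  | Const of R
  | Leaf of vec R n.

(* A (possibly infinite) rooted binary tree is given by the labels of its
   nodes, addressed by the sequence of edge labels (bits) from the root.
   Only addresses all of whose strict prefixes are internal nodes are
   actual nodes of the tree; labels at other addresses are irrelevant. *)
Definition factory (R : realType) (n : nat) := seq bool -> node R n.

Definition is_internal (R : realType) (n : nat) (a : node R n) : bool :=
  if a is Leaf _ then false else true.

Definition is_node (R : realType) (n : nat) (F : factory R n) (p : seq bool) : bool :=
  all (fun i => is_internal (F (take i p))) (iota 0 (size p)).

Definition edge_prob (R : realType) (n : nat) (x : vec R n) (a : node R n) (b : bool) : R :=
  match a with
  | Coin i => if b then x i else 1 - x i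
  | Const c => if b then c else 1 - c
  | Leaf _ => 0
  end.

Definition path_prob (R : realType) (n : nat) (F : factory R n) (x : vec R n)
    (p : seq bool) : R :=
  \prod_(i < size p) edge_prob x (F (take i p)) (nth false p i).

Definition depth_sum (R : realType) (n : nat) (F : factory R n) (x : vec R n)
    (g : vec R n -> R) (k : nat) : R :=
  \sum_(t : k.-tuple bool)
     (if is_node F t then
        (if F t is Leaf v then path_prob F x t * g v else 0)
      else 0).

(* Bernoulli factory for P: internal constant labels lie in (0,1), leaf labels
   are vertices of P, and for every x in P ∩ (0,1)^n it terminates a.s.
   (total probability of reaching a leaf is 1) and E[F(x)] = x
   (coordinatewise: sum over leaves of Pr[leaf] * label_j = x_j). *)
Definition is_factory_for (R : realType) (n : nat) (P : set (vec R n))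
    (F : factory R n) : Prop :=
  (forall p, is_node F p ->
     match F p with
     | Coin _ => True
     | Const c => 0 < c < 1
     | Leaf v => is_vertex P v
     end) /\
  forall x : vec R n, P x -> in_open_cube x ->
    ((fun K : nat => \sum_(k < K) depth_sum F x (fun _ => 1) k) @ \oo --> (1 : R)) /\
    forall j : 'I_n,
      (fun K : nat => \sum_(k < K) depth_sum F x (fun v => v j) k) @ \oo --> x j.

From HB Require Import structures.
From mathcomp Require Import all_boot all_order all_algebra.
From mathcomp Require Import all_classical all_reals topology normedtype sequences.
From mathcomp Require Import ring lra.
Import Order.TTheory GRing.Theory Num.Theory.
Import numFieldNormedType.Exports.
Local Open Scope classical_set_scope.
Local Open Scope ring_scope.

(* On an input x in the open cube every node of the tree is reached with
   positive probability, since the known coins have biases in (0,1).  Hence the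
   output distribution writes x as a convex combination of the vertices of P
   whose support is exactly the set K of vertices labelling some leaf, a set
   that does not depend on x.  A polytope in which every point of the open cube
   has a representation with one fixed support K is [0,1]^n ∩ H, where H is x0
   plus the zero-sum combinations of the vertices in K: P ⊆ H by comparing the
   representations of x0 and of the midpoint of x0 and a point of P, and
   [0,1]^n ∩ H ⊆ P because the last point of P on the segment from x0 to a
   point of [0,1]^n ∩ H would lie in the open cube, and could therefore be
   pushed further along the segment. *)

Section ConvexHull.
Context {R : realType} {n : nat}.

Lemma sum1_weight_gt0 {m : nat} (w : 'I_m -> R) :
  (forall i, 0 <= w i) -> \sum_i w i = 1 -> exists i, 0 < w i.
Proof.
move=> w0 w1; apply: contrapT => /forallNP wle0; move: w1.
rewrite big1 => [/eqP|i _]; first by rewrite eq_sym oner_eq0.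
by apply/eqP; rewrite eq_le w0 andbT leNgt; apply/negP/wle0.
Qed.

Lemma conv_hull_gen {m : nat} (s : 'I_m -> vec R n) i : conv_hull s (s i).
Proof.
exists (fun k => if k == i then 1 else 0); split; first by move=> k; case: eqP.
split; first by rewrite -big_mkcond big_pred1_eq.
move=> j; rewrite (bigD1 i) //= eqxx mul1r big1 ?addr0 // => k /negbTE ->.
by rewrite mul0r.
Qed.

Lemma conv_hull_convex {m : nat} (s : 'I_m -> vec R n) (a b : vec R n) (t : R) :
  conv_hull s a -> conv_hull s b -> 0 <= t <= 1 ->
  conv_hull s (fun j => t * a j + (1 - t) * b j).
Proof.
move=> [wa [wa0 [wa1 ha]]] [wb [wb0 [wb1 hb]]] /andP[t0 t1].
exists (fun i => t * wa i + (1 - t) * wb i); split.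
  by move=> i; rewrite addr_ge0 // mulr_ge0 // subr_ge0.
split; first by rewrite big_split /= -!mulr_sumr wa1 wb1; ring.
move=> j; rewrite ha hb !mulr_sumr -big_split /=.
by apply: eq_bigr => i _; ring.
Qed.

Lemma conv_hull_split {m : nat} (s : 'I_m -> vec R n) (w : 'I_m -> R) i :
  (forall k, 0 <= w k) -> \sum_k w k = 1 -> w i < 1 ->
  exists2 z, conv_hull s z &
    forall j, \sum_k w k * s k j = w i * s i j + (1 - w i) * z j.
Proof.
move=> w0 w1 wi1; have wi1_gt0 : 0 < 1 - w i by rewrite subr_gt0.
pose u k := if k == i then 0 else w k / (1 - w i).
have rest : \sum_(k | k != i) w k = 1 - w i.
  by move: w1; rewrite (bigD1 i) //= => <-; rewrite addrC addrK.
exists (fun j => \sum_k u k * s k j).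
  exists u; split; first by move=> k; rewrite /u; case: eqP => // _; rewrite divr_ge0 // ltW.
  split => //; rewrite (bigD1 i) //= /u eqxx add0r.
  rewrite (eq_bigr (fun k => w k / (1 - w i))) => [|k /negbTE -> //].
  by rewrite -mulr_suml rest divff // gt_eqF.
move=> j; rewrite (bigD1 i) //= (bigD1 i (P := xpredT)) //= /u eqxx mul0r add0r.
congr (_ + _); rewrite mulr_sumr; apply: eq_bigr => k /negbTE ->.
by rewrite mulrA mulrCA divff ?mulr1 // gt_eqF.
Qed.

Lemma vertex_conv_hull_gen {m : nat} (s : 'I_m -> vec R n) v :
  is_vertex (conv_hull s) v -> exists i, s i = v.
Proof.
move=> [[w [w0 [w1 wv]]] extreme].
have [i wi_gt0] := sum1_weight_gt0 _ w0 w1.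
have wi_le1 : w i <= 1 by rewrite -w1 (bigD1 i) //= lerDl sumr_ge0.
have [wi1|wi_neq1] := eqVneq (w i) 1.
  have rest0 : \sum_(k | k != i) w k = 0.
    by move: w1; rewrite (bigD1 i) //= wi1; lra.
  have wk0 := psumr_eq0P (fun k _ => w0 k) rest0.
  exists i; apply/funext => j; rewrite wv (bigD1 i) //= wi1 mul1r big1 ?addr0 //.
  by move=> k ki; rewrite wk0 // mul0r.
have wi_lt1 : w i < 1 by rewrite lt_neqAle wi_neq1.
have wi01 : 0 < w i < 1 by rewrite wi_gt0.
have [z Pz vz] := conv_hull_split s w i w0 w1 wi_lt1.
have [<- _] := extreme (s i) z (w i) (conv_hull_gen s i) Pz
  wi01 (fun j => etrans (wv j) (vz j)).
by exists i.
Qed.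

Lemma open_cube_conv {a b : vec R n} {t : R} :
  in_open_cube a -> in_cube b -> 0 < t <= 1 ->
  in_open_cube (fun j => t * a j + (1 - t) * b j).
Proof.
move=> oa cb /andP[t0 t1] j; have /andP[a0 a1] := oa j; have /andP[b0 b1] := cb j.
have : 0 < t * a j by rewrite mulr_gt0.
have : t * a j < t by rewrite -[ltRHS]mulr1 ltr_pM2l.
have : 0 <= (1 - t) * b j by rewrite mulr_ge0 // subr_ge0.
have : (1 - t) * b j <= 1 - t by rewrite -[leRHS]mulr1 ler_wpM2l // subr_ge0.
lra.
Qed.

End ConvexHull.

Section Closedness.
Context {R : realType} {n : nat}.
Import ArrowAsProduct.

Lemma continuous_vec (X : topologicalType) (f : X -> vec R n) :
  (forall j, continuous (fun x => f x j)) -> continuous f.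
Proof.
move=> fj x; apply/cvg_sup => j.
exact: (@continuous_comp_initial ('I_n -> R) X R (fun g => g j) f (fj j) x).
Qed.

Lemma continuous_lincomb {m : nat} (c : 'I_m -> R) :
  continuous (fun w : 'I_m -> R => \sum_i w i * c i).
Proof.
apply: (@continuous_big R _ +%R 0 xpredT add_continuous) => i _ w.
apply: (@continuousM R _ (fun w : 'I_m -> R => w i) (fun _ => c i) w).
  exact: proj_continuous.
exact: cst_continuous.
Qed.

Lemma conv_hull_closed {m : nat} (s : 'I_m -> vec R n) :
  closed (conv_hull s : set ('I_n -> R)).
Proof.
pose D := [set w : 'I_m -> R | forall i, `[0, 1]%classic (w i)] `&`
   ((fun w : 'I_m -> R => \sum_i w i * 1) @^-1` [set 1]).
pose g (w : 'I_m -> R) : 'I_n -> R := fun j => \sum_i w i * s i j.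
have sum_mul1 (w : 'I_m -> R) : \sum_i w i * 1 = \sum_i w i.
  by apply: eq_bigr => i _; rewrite mulr1.
have -> : (conv_hull s : set ('I_n -> R)) = g @` D.
  apply/seteqP; split => x.
    move=> [w [w0 [w1 wx]]]; exists w; last by apply/funext => j; rewrite wx.
    split; last by rewrite /= sum_mul1.
    move=> i /=; rewrite in_itv /= w0 /=.
    by rewrite -w1 (bigD1 i) //= lerDl sumr_ge0.
  move=> [w [w01 w1] <-]; exists w; split.
    by move=> i; have := w01 i; rewrite /= in_itv /= => /andP[].
  by split; first by rewrite -w1 /= sum_mul1.
apply: compact_closed; first by apply: hausdorff_product => _; exact: norm_hausdorff.
apply: continuous_compact.
  apply: continuous_subspaceT; apply: continuous_vec => j.
  exact: continuous_lincomb.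
apply: compact_closedI.
  exact: (@tychonoff 'I_m (fun _ => R) (fun _ => `[0, 1]%classic)
            (fun _ => @segment_compact R 0 1)).
apply: preimage_closed; first by move=> w _; exact: continuous_lincomb.
exact: (@accessible_closed_set1 R (hausdorff_accessible (@norm_hausdorff _ R^o)) 1).
Qed.

Lemma conv_hull_line_closed {m : nat} (s : 'I_m -> vec R n) (x0 d : vec R n) :
  closed [set t : R | conv_hull s (fun j => x0 j + t * d j)].
Proof.
have line_cont : continuous (fun t : R => (fun j => x0 j + t * d j) : vec R n).
  apply: continuous_vec => j t.
  by apply: cvgD; [exact: cvg_cst | apply: cvgMr_tmp; exact: cvg_id].
apply: preimage_closed; last exact: conv_hull_closed.
by move=> t _; exact: line_cont.
Qed.

End Closedness.

Section SupportedCombination.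
Context {R : realType} {n m : nat} (s : 'I_m -> vec R n).

Definition conv_rep (K : 'I_m -> Prop) (x : vec R n) :=
  exists q : 'I_m -> R, (forall i, 0 <= q i) /\ (forall i, 0 < q i <-> K i) /\
    \sum_i q i = 1 /\ forall j, x j = \sum_i q i * s i j.

Definition dir_space (K : 'I_m -> Prop) : set (vec R n) :=
  [set u | exists a : 'I_m -> R, (forall i, ~ K i -> a i = 0) /\
     \sum_i a i = 0 /\ u = fun j => \sum_i a i * s i j].

Lemma dir_space_linear K : is_linear_subspace (dir_space K).
Proof.
split; last split.
- exists (fun _ => 0); split => //; split; first by rewrite big1.
  by apply/funext => j; rewrite big1 // => i _; rewrite mul0r.
- move=> u v [a [aK [a0 ->]]] [b [bK [b0 ->]]].
  exists (fun i => a i + b i); split; first by move=> i nK; rewrite aK // bK // addr0.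
  split; first by rewrite big_split /= a0 b0 addr0.
  by apply/funext => j; rewrite -big_split /=; apply: eq_bigr => i _; ring.
- move=> c u [a [aK [a0 ->]]].
  exists (fun i => c * a i); split; first by move=> i nK; rewrite aK // mulr0.
  split; first by rewrite -mulr_sumr a0 mulr0.
  by apply/funext => j; rewrite mulr_sumr; apply: eq_bigr => i _; ring.
Qed.

Lemma weight_eq0_off {K : 'I_m -> Prop} {q : 'I_m -> R} {i} :
  (forall i, 0 <= q i) -> (forall i, 0 < q i <-> K i) -> ~ K i -> q i = 0.
Proof.
move=> q0 qK nKi; apply/eqP; rewrite eq_le q0 andbT leNgt.
by apply/negP => /qK.
Qed.

Lemma nonneg_step (q a : 'I_m -> R) (r : R) :
  0 < r -> (forall i, 0 <= q i) -> (forall i, a i != 0 -> 0 < q i) ->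
  exists2 e, 0 < e <= r & forall i, 0 <= q i + e * a i.
Proof.
move=> r0 q0 qa; pose e := \big[Order.min/r]_(i | a i != 0) (q i / `|a i|).
have e_gt0 : 0 < e.
  by apply/bigmin_gtP; split => // i ai; rewrite divr_gt0 ?normr_gt0 ?qa.
exists e; first by rewrite e_gt0 bigmin_le_id.
move=> i; have [->|ai] := eqVneq (a i) 0; first by rewrite mulr0 addr0.
have : e * `|a i| <= q i.
  by rewrite -ler_pdivlMr ?normr_gt0 //; exact: bigmin_le_cond.
have : e * - `|a i| <= e * a i.
  by apply: ler_wpM2l; [exact: ltW | exact: lerNnormlW].
rewrite mulrN; lra.
Qed.

Lemma conv_rep_step {K y} {a : 'I_m -> R} {r : R} :
  conv_rep K y -> (forall i, ~ K i -> a i = 0) -> \sum_i a i = 0 -> 0 < r ->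
  exists2 e, 0 < e <= r & conv_hull s (fun j => y j + e * \sum_i a i * s i j).
Proof.
move=> [q [q0 [qK [q1 qy]]]] aK a0 r0.
have qa i : a i != 0 -> 0 < q i.
  by move=> ai; apply/qK; apply: contrapT => nKi; move: ai; rewrite aK ?eqxx.
have [e e0r qae] := nonneg_step q a r r0 q0 qa.
exists e => //; exists (fun i => q i + e * a i); split => //; split.
  by rewrite big_split /= -mulr_sumr a0 q1 mulr0 addr0.
move=> j; rewrite qy mulr_sumr -big_split /=.
by apply: eq_bigr => i _; ring.
Qed.

End SupportedCombination.

Section SupportPolytope.
Context {R : realType} {n m : nat} (s : 'I_m -> vec R n) (K : 'I_m -> Prop).
Variable x0 : vec R n.
Hypothesis conv_hull_cube : forall {x}, conv_hull s x -> in_cube x.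
Hypothesis conv_hull_x0 : conv_hull s x0.
Hypothesis open_cube_x0 : in_open_cube x0.
Hypothesis open_cube_rep : forall {x}, conv_hull s x -> in_open_cube x -> conv_rep s K x.

Let flat : set (vec R n) := [set y | exists u, dir_space s K u /\ y = fun j => x0 j + u j].

Lemma conv_hull_sub_flat : conv_hull s `<=` flat.
Proof.
move=> p Pp.
have [q0 [q0_ge0 [q0K [q0_sum1 q0x]]]] := open_cube_rep conv_hull_x0 open_cube_x0.
pose mid j := 2^-1 * x0 j + (1 - 2^-1) * p j.
have Pmid : conv_hull s mid by apply: conv_hull_convex => //; lra.
have omid : in_open_cube mid.
  by apply: open_cube_conv => //; [exact: conv_hull_cube | lra].
have [qm [qm_ge0 [qmK [qm_sum1 qmx]]]] := open_cube_rep Pmid omid.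
exists (fun j => p j - x0 j); split; last by apply/funext => j; ring.
exists (fun i => 2 * (qm i - q0 i)); split.
  move=> i nKi.
  by rewrite (weight_eq0_off qm_ge0 qmK nKi) (weight_eq0_off q0_ge0 q0K nKi) subrr mulr0.
split; first by rewrite -mulr_sumr sumrB qm_sum1 q0_sum1 subrr mulr0.
apply/funext => j.
have -> : \sum_i 2 * (qm i - q0 i) * s i j = 2 * (mid j - x0 j).
  by rewrite qmx q0x -sumrB mulr_sumr; apply: eq_bigr => i _; ring.
by rewrite /mid; field.
Qed.

Lemma cube_flat_sub_conv_hull p : in_cube p -> flat p -> conv_hull s p.
Proof.
move=> cube_p [_ [[a [aK [a0 ->]]] p_def]]; rewrite {p}p_def in cube_p *.
set d := fun j => \sum_i a i * s i j in cube_p *.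
pose z t : vec R n := fun j => x0 j + t * d j.
pose S := [set t | conv_hull s (z t)] `&` `[0, 1]%classic.
have S0 : S 0.
  split; last by rewrite /= in_itv /= lexx ler01.
  change (conv_hull s (z 0)).
  by have -> : z 0 = x0 by apply/funext => j; rewrite /z mul0r addr0.
have ubS : has_ubound S by exists 1 => t [_]; rewrite /= in_itv /= => /andP[].
have closedS : closed S.
  by apply: closedI; [exact: conv_hull_line_closed | exact: interval_closed].
have [PT] : S (sup S).
  by have := closure_sup (ex_intro _ 0 S0) ubS; rewrite -(closure_id S).1.
set T := sup S in PT *; rewrite /= in_itv /= => /andP[T0 T1].
change (conv_hull s (z T)) in PT.
have [T_eq1|T_neq1] := eqVneq T 1.
  have zT_p : z T = fun j => x0 j + d j by apply/funext => j; rewrite /z T_eq1 mul1r.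
  by rewrite zT_p in PT.
have oT : 0 < 1 - T <= 1 by apply/andP; split; [rewrite subr_gt0 lt_neqAle T_neq1 |]; lra.
have ozT : in_open_cube (z T).
  have -> : z T = fun j => (1 - T) * x0 j + (1 - (1 - T)) * (x0 j + d j).
    by apply/funext => j; rewrite /z; ring.
  exact: open_cube_conv open_cube_x0 cube_p oT.
have [e /andP[e0 e_le] Pe] := conv_rep_step s (open_cube_rep PT ozT) aK a0 (proj1 (andP oT)).
have : S (T + e).
  split; last by rewrite /= in_itv /=; apply/andP; split; lra.
  change (conv_hull s (z (T + e))).
  by have -> : z (T + e) = fun j => z T j + e * d j by apply/funext => j; rewrite /z; ring.
by move/(sup_upper_bound (conj (ex_intro _ 0 S0) ubS)); rewrite -/T; lra.
Qed.

Lemma conv_hull_eq_cube_flat :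
  exists H, is_affine_subspace H /\ conv_hull s = [set x | in_cube x /\ H x].
Proof.
exists flat; split; first by exists x0, (dir_space s K); split => //; exact: dir_space_linear.
apply/seteqP; split => [p Pp | p [cube_p flat_p]]; last exact: cube_flat_sub_conv_hull.
by split; [exact: conv_hull_cube | exact: conv_hull_sub_flat].
Qed.

End SupportPolytope.

Section FactoryOutput.
Context {R : realType} {n : nat} (F : factory R n).
Hypothesis const_label_in01 : forall {p}, is_node F p ->
  match F p with Const c => 0 < c < 1 | _ => True end.

Lemma is_node_take {p} i : is_node F p -> is_node F (take i p).
Proof.
move=> /allP p_node; apply/allP => k.
rewrite mem_iota size_take_min add0n => /andP[_ k_lt].
rewrite take_takel; last exact/ltnW/(leq_trans k_lt)/geq_minl.
by apply: p_node; rewrite mem_iota add0n (leq_trans k_lt (geq_minr _ _)).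
Qed.

Lemma is_node_internal {p i} : is_node F p -> (i < size p)%N -> is_internal (F (take i p)).
Proof. by move=> /allP p_node ip; apply: p_node; rewrite mem_iota add0n. Qed.

Lemma path_prob_gt0 x p : in_open_cube x -> is_node F p -> 0 < path_prob F x p.
Proof.
move=> ox p_node; apply: prodr_gt0 => i _.
have := const_label_in01 (is_node_take i p_node).
case: (F (take i p)) (is_node_internal p_node (ltn_ord i)) => [k|c|v] //= _.
  by have /andP[xk0 xk1] := ox k; case: nth; rewrite ?subr_gt0.
by move=> /andP[c0 c1]; case: nth; rewrite ?subr_gt0.
Qed.

Context {m : nat} (s : 'I_m -> vec R n) (label_index : vec R n -> 'I_m).
Hypothesis leaf_label_index : forall {p v}, is_node F p -> F p = Leaf v ->
  s (label_index v) = v.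

Definition labels_leaf (i : 'I_m) : Prop :=
  exists t v, is_node F t /\ F t = Leaf v /\ label_index v = i.

Variable x : vec R n.
Hypothesis open_cube_x : in_open_cube x.

Definition leaf_weight (i : 'I_m) (t : seq bool) : R :=
  if is_node F t then
    (if F t is Leaf v then (if label_index v == i then path_prob F x t else 0) else 0)
  else 0.

Definition leaf_mass (i : 'I_m) (k : nat) : R :=
  \sum_(t : k.-tuple bool) leaf_weight i t.

Definition leaf_mass_upto (i : 'I_m) (K : nat) : R := \sum_(k < K) leaf_mass i k.

Lemma leaf_weight_ge0 i t : 0 <= leaf_weight i t.
Proof.
rewrite /leaf_weight; case: ifP => // t_node; case: (F t) => // v.
by case: eqP => // _; exact/ltW/path_prob_gt0.
Qed.

Lemma leaf_mass_ge0 i k : 0 <= leaf_mass i k.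
Proof. by apply: sumr_ge0 => t _; exact: leaf_weight_ge0. Qed.

Lemma leaf_mass_eq0 i k : ~ labels_leaf i -> leaf_mass i k = 0.
Proof.
move=> no_leaf; apply: big1 => t _; rewrite /leaf_weight; case: ifP => // t_node.
case E: (F t) => [||v] //; case: eqP => // vi.
by case: no_leaf; exists t, v.
Qed.

Lemma leaf_mass_gt0 {t v} : is_node F t -> F t = Leaf v ->
  0 < leaf_mass (label_index v) (size t).
Proof.
move=> t_node E; rewrite /leaf_mass (bigD1 (in_tuple t)) //= /leaf_weight t_node E eqxx.
rewrite ltr_pwDl ?path_prob_gt0 // sumr_ge0 // => u _; exact: leaf_weight_ge0.
Qed.

Lemma depth_sum_leaf_mass g k : depth_sum F x g k = \sum_i g (s i) * leaf_mass i k.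
Proof.
rewrite /depth_sum /leaf_mass; under [RHS]eq_bigr do rewrite mulr_sumr.
rewrite exchange_big /=; apply: eq_bigr => t _; rewrite /leaf_weight.
case: ifP => t_node; last by rewrite big1 // => i _; rewrite mulr0.
case E: (F t) => [k'|c|v]; try by rewrite big1 // => i _; rewrite mulr0.
rewrite (bigD1 (label_index v)) //= eqxx big1 ?addr0; last first.
  by move=> i /negbTE; rewrite eq_sym => ->; rewrite mulr0.
by rewrite (leaf_label_index t_node E) mulrC.
Qed.

Lemma sum_depth_sum_leaf_mass g K :
  \sum_(k < K) depth_sum F x g k = \sum_i g (s i) * leaf_mass_upto i K.
Proof.
under eq_bigr do rewrite depth_sum_leaf_mass.
by rewrite exchange_big /=; apply: eq_bigr => i _; rewrite mulr_sumr.
Qed.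

Lemma leaf_mass_upto_nondecreasing i :
  {homo leaf_mass_upto i : a b / (a <= b)%N >-> a <= b}.
Proof.
move=> a b ab; rewrite /leaf_mass_upto -!(big_mkord xpredT).
by apply: nondecreasing_series => // k _ _; exact: leaf_mass_ge0.
Qed.

Hypothesis total_mass1 :
  (fun K : nat => \sum_(k < K) depth_sum F x (fun _ => 1) k) @ \oo --> (1 : R).

Lemma leaf_mass_upto_le1 i K : leaf_mass_upto i K <= 1.
Proof.
have total_nd : {homo (fun K => \sum_(k < K) depth_sum F x (fun _ => 1) k) :
    a b / (a <= b)%N >-> a <= b}.
  move=> a b ab /=; rewrite !sum_depth_sum_leaf_mass; apply: ler_sum => k _.
  by rewrite !mul1r leaf_mass_upto_nondecreasing.
have total_le1 : \sum_(k < K) depth_sum F x (fun _ => 1) k <= 1.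
  have := nondecreasing_cvgn_le total_nd (cvgP _ total_mass1) K.
  by rewrite (cvg_lim _ total_mass1).
apply: le_trans total_le1.
rewrite sum_depth_sum_leaf_mass (bigD1 i) //= mul1r lerDl.
by apply: sumr_ge0 => k _; rewrite mul1r sumr_ge0 // => k' _; exact: leaf_mass_ge0.
Qed.

Lemma leaf_mass_upto_cvg i : cvgn (leaf_mass_upto i).
Proof.
apply: nondecreasing_is_cvgn; first exact: leaf_mass_upto_nondecreasing.
by exists 1 => _ [K _ <-]; exact: leaf_mass_upto_le1.
Qed.

Lemma leaf_mass_upto_ge_lim i K : leaf_mass_upto i K <= limn (leaf_mass_upto i).
Proof.
exact: nondecreasing_cvgn_le (leaf_mass_upto_nondecreasing i) (leaf_mass_upto_cvg i) K.
Qed.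

Lemma lim_leaf_mass_upto_gt0 i : 0 < limn (leaf_mass_upto i) <-> labels_leaf i.
Proof.
split => [lim_gt0 | [t [v [t_node [E <-]]]]].
  apply: contrapT => no_leaf; move: lim_gt0.
  have -> : leaf_mass_upto i = fun _ => 0.
    by apply/funext => K; apply: big1 => k _; exact: leaf_mass_eq0.
  by rewrite lim_cst ?ltxx //; exact: norm_hausdorff.
apply: lt_le_trans (leaf_mass_upto_ge_lim _ (size t).+1).
rewrite /leaf_mass_upto big_ord_recr /=.
have := leaf_mass_gt0 t_node E.
have : 0 <= \sum_(k < size t) leaf_mass (label_index v) k.
  by apply: sumr_ge0 => k _; exact: leaf_mass_ge0.
lra.
Qed.

Lemma depth_sum_cvg g : (fun K => \sum_(k < K) depth_sum F x g k) @ \oo -->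
  \sum_i g (s i) * limn (leaf_mass_upto i).
Proof.
under eq_fun do rewrite sum_depth_sum_leaf_mass.
apply: (cvg_big add_continuous) => // i _; apply: cvgMl_tmp.
exact: leaf_mass_upto_cvg.
Qed.

Lemma factory_conv_rep :
  (forall j, (fun K => \sum_(k < K) depth_sum F x (fun v => v j) k) @ \oo --> x j) ->
  conv_rep s labels_leaf x.
Proof.
move=> mean; have hausR : hausdorff_space R by exact: norm_hausdorff.
exists (fun i => limn (leaf_mass_upto i)); split; last split; last split.
- move=> i; apply: le_trans (leaf_mass_upto_ge_lim i 0).
  by rewrite /leaf_mass_upto big_ord0.
- exact: lim_leaf_mass_upto_gt0.
- rewrite -[RHS](cvg_unique hausR (depth_sum_cvg (fun _ => 1)) total_mass1).
  by apply: eq_bigr => i _; rewrite mul1r.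
- move=> j; rewrite (cvg_unique hausR (mean j) (depth_sum_cvg (fun v => v j))).
  by apply: eq_bigr => i _; rewrite mulrC.
Qed.

End FactoryOutput.

Theorem theorem4p1 (R : realType) (n : nat) (P : set (vec R n)) :
  is_polytope P ->
  (forall x, P x -> in_cube x) ->
  (exists x, P x /\ in_open_cube x) ->
  ~ (exists H : set (vec R n), is_affine_subspace H /\ P = [set x | in_cube x /\ H x]) ->
  ~ (exists F : factory R n, is_factory_for P F).
Proof.
move=> [m [s ->]] conv_cube [x0 [Px0 ox0]] not_affine [F [F_labels F_output]].
have [w [w0 [w1 _]]] := Px0; have [i0 _] := sum1_weight_gt0 w w0 w1.
pose label_index v :=
  if pselect (exists i, s i = v) is left ex then projT1 (cid ex) else i0.
have leaf_label_index p v : is_node F p -> F p = Leaf v -> s (label_index v) = v.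
  move=> p_node E; have := F_labels p p_node; rewrite E => /vertex_conv_hull_gen ex.
  by rewrite /label_index; case: pselect => // ex'; exact: projT2 (cid ex').
have const_in01 p : is_node F p -> match F p with Const c => 0 < c < 1 | _ => True end.
  by move=> p_node; have := F_labels p p_node; case: (F p).
apply/not_affine/(conv_hull_eq_cube_flat s (labels_leaf F label_index) x0) => // x Px ox.
have [total_mass1 mean] := F_output x Px ox.
exact: (factory_conv_rep F const_in01 s label_index leaf_label_index x ox
          total_mass1 mean).
Qed.
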